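(* Let $\lambda$ be a Perron number and let $f_\lambda:\ast_{mM}\to\ast_{mM}$ be the star map constructed below. Then its split map $S(f_\lambda):S(\ast_{mM})\to S(\ast_{mM})$ is mixing; i.e. for every edge $y_I$ of $S(\ast_{mM})$ there exists $L$ such that the edge path $S(f_\lambda)^L(y_I)$ traverses every edge of $S(\ast_{mM})$.
   Context: A Perron number is a real algebraic integer $\lambda$ with $\lambda>|\lambda_i|$ for every other Galois conjugate $\lambda_i$. Construction of $f_\lambda$: let $d=\deg\lambda$, $\mathcal{O}_\lambda$ the ring of integers of $\mathbb{Q}(\lambda)$, $V_\lambda=\mathbb{Q}(\lambda)\otimes_{\mathbb{Q}}\mathbb{R}\cong\mathbb{R}^d$, on which multiplication by $\lambda$ is linear with unit eigenvectors $v_1,\dots,v_d$, $v_1$ for the eigenvalue $\lambda$. Let $K_\lambda=\{\sum a_iv_i: a_1>0,\ a_1>|a_i|\ (i\ge2)\}$, let $KR_\lambda$ be a closed convex polyhedral cone generated by finitely many elements of $\mathcal{O}_\lambda$ with $\lambda K_\lambda\subset KR_\lambda\subset K_\lambda$, and $S_\lambda=(\mathcal{O}_\lambda\cap KR_\lambda)\setminus\{0\}$, an additive semigroup generated by finitely many elements $s_1,\dots,s_m$ (viewed as positive real numbers via $\mathbb{Q}(\lambda)\subset\mathbb{R}$). Choose positive integers $N>n_0$ with $\lambda^N\equiv\lambda^{n_0}\pmod{2\mathcal{O}_\lambda}$; put $T=s_1+\dots+s_m$ and $g_k=\lambda^{n_0}s_k+2(T+\lambda s_k)$. Choose an integer $p\ge0$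 so that $M=p(N-n_0)+N$ satisfies $\lambda^Ms_k\in g_k+S_\lambda$ for all $k$; then there are nonnegative integers $e^{(k)}_i$ with $\lambda^Ms_k=\sum_{i=1}^m(2e^{(k)}_i+2)s_i+2\lambda s_k+\lambda^{n_0}s_k$. The star $\ast_{mM}=K_{1,mM}$ has edges $(s_k,i)$, $1\le k\le m$, $1\le i\le M$, oriented from center to tip, of length $\lambda^{i-1}s_k$. The graph map $f_\lambda$ fixes the center, sends $(s_k,i)\mapsto(s_k,i+1)$ for $i<M$, and sends $(s_k,M)$ to the edge path which first traverses $(s_k,1)$ back and forth $e^{(k)}_k+1$ times (i.e. $2e^{(k)}_k+2$ traversals), then, for each $j\ne k$ in some fixed order, traverses $(s_j,1)$ back and forth $e^{(k)}_j+1$ times, then traverses $(s_k,2)$ out and back once, and finally traverses $(s_k,n_0+1)$ once. Split map: prototype graph $P_7$ has vertices $v_0,v_1$ and edges $a,\dots,g$ oriented $v_0\to v_1$ (uppercase = reversed); $\phi_1=\mathrm{id}$ and for $m'\ge0$, $\phi_{3+2m'}$: $a\mapsto aG(aB)^{m'}a$, $b\mapsto bD(bC)^{m'}b$, $c\mapsto cF(cA)^{m'}c$, $d\mapsto aB(aB)^{m'}a$, $e\mapsto cB(aB)^{m'}a$, $f\mapsto aC(aB)^{m'}a$, $g\mapsto bE(bA)^{m'}b$. The split graph replaces each edge $x_I$ of the star by seven parallel edges $a_I,\dots,g_I$; the split map sends $y_I$ to the path obtained from the word $\phi_{\ell}(y)$, $\ell$ the number of edges of $f_\lambda(x_I)$,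 by giving its $t$-th letter the subscript of the $t$-th edge of $f_\lambda(x_I)$. A graph map is mixing if some positive power of its transition matrix (entry $(i,j)$ = number of times edge $i$ occurs in the image path of edge $j$) is positive. *)

From HB Require Import structures.
From mathcomp Require Import all_boot all_order all_algebra all_field.
Set Implicit Arguments. Unset Strict Implicit. Unset Printing Implicit Defensive.
Import Order.TTheory GRing.Theory Num.Theory.

Definition inQ (lam x : algC) : Prop :=
  exists p : {poly rat}, (x = (map_poly ratr p).[lam])%R.

Definition inO (lam x : algC) : Prop := inQ lam x /\ x \in Aint.

Definition Perron (lam : algC) : Prop :=
  [/\ lam \is Num.real, lam \in Aint &
      forall z : algC, root (minCpoly lam) z -> z != lam -> (`|z| < lam)%R].

(* Star *_{mM}: edge (s_k, i) (1 <= i <= M) is encoded as (k, i-1), with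
   k : 'I_m and i-1 : nat (a valid edge has i-1 < M).
   An edge path is a list of (edge, orientation), true = forward
   (center -> tip).                   *)

Definition sedge (m : nat) := ('I_m * nat)%type.

Definition bf (m : nat) (x : sedge m) (r : nat) : seq (sedge m * bool) :=
  flatten (nseq r [:: (x, true); (x, false)]).

(* the star map f_lambda, determined by m, M, n0, the exponents
   e k i = e^{(k)}_i and, for each k, the fixed order ord k of the j != k. *)
Definition fstar (m M n0 : nat) (e : 'I_m -> 'I_m -> nat)
    (ord : 'I_m -> seq 'I_m) (x : sedge m) : seq (sedge m * bool) :=
  let: (k, i) := x in
  if i.+1 < M then [:: ((k, i.+1), true)]
  else bf (k, 0%N) (e k k).+1
       ++ flatten [seq bf (j, 0%N) (e k j).+1 | j <- ord k]
       ++ [:: ((k, 1%N), true); ((k, 1%N), false); ((k, n0), true)].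

Definition la : 'I_7 := inord 0.
Definition lb : 'I_7 := inord 1.
Definition lc : 'I_7 := inord 2.
Definition ld : 'I_7 := inord 3.
Definition le : 'I_7 := inord 4.
Definition lf : 'I_7 := inord 5.
Definition lg : 'I_7 := inord 6.

(* word  u V (x Z)^{m'} w  (lowercase = forward, uppercase = reversed) *)
Definition pword (u V x Z w : 'I_7) (m' : nat) : seq ('I_7 * bool) :=
  [:: (u, true); (V, false)] ++ flatten (nseq m' [:: (x, true); (Z, false)])
  ++ [:: (w, true)].

Definition phi_odd (m' : nat) (y : 'I_7) : seq ('I_7 * bool) :=
  if y == la then pword la lg la lb la m'
  else if y == lb then pword lb ld lb lc lb m'
  else if y == lc then pword lc lf lc la lc m'
  else if y == ld then pword la lb la lb la m'
  else if y == le then pword lc lb la lb la m'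
  else if y == lf then pword la lc la lb la m'
  else pword lb le lb la lb m'.

(* phi_l : identity for l = 1, phi_{3+2m'} for l = 3 + 2m'
   (only odd l occur in the construction). *)
Definition phi (l : nat) (y : 'I_7) : seq ('I_7 * bool) :=
  if l <= 1 then [:: (y, true)] else phi_odd (l - 3)./2 y.

(* Split map S(f_lambda): the split edge y_I is encoded as (y, I). *)
Definition split_img (m M n0 : nat) (e : 'I_m -> 'I_m -> nat)
    (ord : 'I_m -> seq 'I_m) (y : 'I_7) (I : sedge m)
    : seq (('I_7 * sedge m) * bool) :=
  let P := fstar M n0 e ord I in
  [seq ((wp.1.1, wp.2.1), wp.1.2) | wp <- zip (phi (size P) y) P].

Definition split_edge (m M : nat) := ('I_7 * 'I_m * 'I_M)%type.

Definition se_val (m M : nat) (z : split_edge m M) : 'I_7 * sedge m :=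
  (z.1.1, (z.1.2, nat_of_ord z.2)).

Definition split_trans (m M n0 : nat) (e : 'I_m -> 'I_m -> nat)
    (ord : 'I_m -> seq 'I_m) : 'M[nat]_#|{: split_edge m M}| :=
  \matrix_(i, j)
    let zi := se_val (enum_val i) in
    let zj := se_val (@enum_val _ (mem {: split_edge m M}) j) in
    count (fun q => q.1 == zi) (split_img M n0 e ord zj.1 zj.2).

Definition mixing_mx (n : nat) (T : 'M[nat]_n) : Prop :=
  exists L : nat, 0 < L /\ forall i j, 0 < (T ^+ L)%R i j.

(* The transition digraph of S(f) is strongly connected and aperiodic, hence its matrix
   is primitive.  Along a star edge the split map just climbs one level; the top edge
   y_(s_k, M) is sent to a path starting with the letters u(y), V(y) of phi(y) on
   (s_k, 1), and carrying x(y) on every (s_j, 1), j <> k, and on (s_k, 2).  The letter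
   graph y -> u(y), V(y) of P_7 is strongly connected, so every split edge reaches the
   hub a_(s_k, M) and back.  Since u(a) = x(a) = a, the hub has closed walks through
   a_(s_k, 1) and a_(s_k, 2), of the coprime lengths M and M - 1. *)

From HB Require Import structures.
From mathcomp Require Import all_boot all_order all_algebra all_field.
Import Order.TTheory GRing.Theory Num.Theory.

Set Implicit Arguments.
Unset Strict Implicit.
Unset Printing Implicit Defensive.

Lemma eventually_all_fin (T : finType) (P : T -> nat -> Prop) :
  (forall t, exists N, forall k, N <= k -> P t k) ->
  exists N, forall k, N <= k -> forall t, P t k.
Proof.
move=> ev; suff [N HN] : exists N, forall k, N <= k -> forall t, t \in enum T -> P t k.
  by exists N => k Nk t; apply: HN; rewrite ?mem_enum.
elim: (enum T) => [|t s [N IH]]; first by exists 0.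
have [Nt Ht] := ev t; exists (maxn N Nt) => k; rewrite geq_max => /andP[Nk Ntk] u.
by rewrite inE => /predU1P[-> | us]; [exact: Ht | exact: IH].
Qed.

Lemma connect_in_arc (T : finType) (e : rel T) x y z :
  e x y -> connect e y z -> exists w, e w z.
Proof.
move=> xy /connectP[p]; elim/last_ind: p => [_ -> | p w _]; first by exists x.
by rewrite rcons_path last_rcons => /andP[_ wz] ->; exists (last y p).
Qed.

Section NatMatrixWalks.
Variables (n : nat) (A : 'M[nat]_n).

(* Arcs go from the column index to the row index, as for a transition matrix. *)
Definition mx_arc : rel 'I_n := fun i j => 0 < A j i.

Definition mx_walk (k : nat) (i j : 'I_n) := 0 < (A ^+ k)%R j i.

Lemma mx_walk0 i : mx_walk 0 i i.
Proof. by rewrite /mx_walk expr0 mxE eqxx. Qed.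

Lemma mx_walkD a b i j l : mx_walk a i j -> mx_walk b j l -> mx_walk (a + b) i l.
Proof.
rewrite /mx_walk addnC exprD -mulmxE mxE => ij jl.
by rewrite (bigD1 j) //= ltn_addr // muln_gt0 jl ij.
Qed.

Lemma mx_walk_path i p : path mx_arc i p -> mx_walk (size p) i (last i p).
Proof.
elim: p i => [|j p IH] i /=; first by rewrite mx_walk0.
case/andP=> ij /IH; rewrite -add1n; apply: mx_walkD; by rewrite /mx_walk expr1.
Qed.

Lemma connect_mx_walk i j : connect mx_arc i j -> exists k, mx_walk k i j.
Proof. by case/connectP=> p /mx_walk_path ip ->; exists (size p). Qed.

Lemma mx_walk_iter c q i : mx_walk c i i -> mx_walk (q * c) i i.
Proof.
move=> ii; elim: q => [|q IH]; first exact: mx_walk0.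
by rewrite mulSn; exact: mx_walkD ii IH.
Qed.

Definition aperiodic_at i := exists2 c, 0 < c & mx_walk c i i && mx_walk c.+1 i i.

Lemma aperiodic_mx_walk_ge i :
  aperiodic_at i -> exists N, forall k, N <= k -> mx_walk k i i.
Proof.
case=> c c_gt0 /andP[wc wc1]; exists (c * c) => k ck.
have r_lt : k %% c < c by rewrite ltn_mod.
have r_le_q : k %% c <= k %/ c by rewrite (leq_trans (ltnW r_lt)) // leq_divRL.
(* [k = q c + r] with [r < c <= q], so [k = (q - r) c + r (c + 1)]. *)
have -> : k = (k %/ c - k %% c) * c + k %% c * c.+1.
  rewrite {1}(divn_eq k c) mulnBl mulnS addnCA subnK ?[_ + k %% c]addnC //.
  by rewrite leq_mul2r r_le_q orbT.
by apply: mx_walkD; apply: mx_walk_iter.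
Qed.

Lemma aperiodic_at_connect i h :
  connect mx_arc i h -> connect mx_arc h i -> aperiodic_at h -> aperiodic_at i.
Proof.
move=> /connect_mx_walk[a ih] /connect_mx_walk[b hi] [c c_gt0 /andP[wc wc1]].
exists (a + c + b); first by rewrite addnAC ltn_addl.
by rewrite -addSn -addnS !(mx_walkD (mx_walkD ih _) hi).
Qed.

Lemma mixing_mx_connect_aperiodic :
  (forall i j, connect mx_arc i j) -> (forall i, aperiodic_at i) -> mixing_mx A.
Proof.
move=> conn aper.
have ev (ij : 'I_n * 'I_n) : exists N, forall k, N <= k -> mx_walk k ij.1 ij.2.
  have [N loops] := aperiodic_mx_walk_ge (aper ij.1).
  have [a walk] := connect_mx_walk (conn ij.1 ij.2).
  exists (N + a) => k Nka.
  have a_le_k : a <= k by rewrite (leq_trans (leq_addl N a)).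
  rewrite -(subnK a_le_k); apply: mx_walkD walk; apply: loops.
  by rewrite leq_subRL // addnC.
have [N walks] := eventually_all_fin ev.
exists N.+1; split=> // j i.
exact: (walks N.+1 (leqnSn N) (i, j)).
Qed.

End NatMatrixWalks.

(* The letters of phi_(3+2m') y = u V (x Z)^m' w do not depend on m';
   read them off phi_3 y. *)
Definition word_letter (y : 'I_7) (t : nat) : 'I_7 := (nth (la, true) (phi_odd 1 y) t).1.

Lemma phi_oddE m' y :
  phi_odd m' y = pword (word_letter y 0) (word_letter y 1) (word_letter y 2)
                       (word_letter y 3) (word_letter y 4) m'.
Proof. by rewrite /word_letter /phi_odd; do 6 case: ifP => _ //. Qed.

(* [inord] does not compute (it goes through the opaque [idP]); these closed forms do. *)
Lemma letterE :
  (la = Ordinal (isT : 0 < 7)) * (lb = Ordinal (isT : 1 < 7)) *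
  (lc = Ordinal (isT : 2 < 7)) * (ld = Ordinal (isT : 3 < 7)) *
  (le = Ordinal (isT : 4 < 7)) * (lf = Ordinal (isT : 5 < 7)) *
  (lg = Ordinal (isT : 6 < 7)).
Proof. by do ![split]; apply: val_inj; rewrite /= inordK. Qed.

Lemma letter_ind (P : 'I_7 -> Prop) :
  P la -> P lb -> P lc -> P ld -> P le -> P lf -> P lg -> forall y, P y.
Proof.
move=> Pa Pb Pc Pd Pe Pf Pg y; rewrite -[y]inord_val.
by case: y => [[|[|[|[|[|[|[|i]]]]]]] Hy].
Qed.

Definition letter_succ : rel 'I_7 :=
  fun y z => (z == word_letter y 0) || (z == word_letter y 1).

Lemma letter_connect y z : connect letter_succ y z.
Proof.
have letter_path x p : path letter_succ x p -> connect letter_succ x (last x p).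
  by move=> xp; apply/connectP; exists p.
(* The letter graph contains the cycles a g b d a and a g e c f a. *)
have to_a x : connect letter_succ x la.
  by elim/letter_ind: x;
    [ exact: connect0 | apply: (letter_path _ [:: ld; la])
    | apply: (letter_path _ [:: lf; la]) | apply: (letter_path _ [:: la])
    | apply: (letter_path _ [:: lc; lf; la]) | apply: (letter_path _ [:: la])
    | apply: (letter_path _ [:: lb; ld; la]) ];
    rewrite /letter_succ /word_letter /phi_odd !letterE.
have from_a x : connect letter_succ la x.
  by elim/letter_ind: x;
    [ exact: connect0 | apply: (letter_path _ [:: lg; lb])
    | apply: (letter_path _ [:: lg; le; lc]) | apply: (letter_path _ [:: lg; lb; ld])
    | apply: (letter_path _ [:: lg; le]) | apply: (letter_path _ [:: lg; le; lc; lf])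
    | apply: (letter_path _ [:: lg]) ];
    rewrite /letter_succ /word_letter /phi_odd !letterE.
exact: connect_trans (to_a y) (from_a z).
Qed.

Lemma word_letter_a : (word_letter la 0 = la) * (word_letter la 2 = la).
Proof. by rewrite /word_letter /phi_odd !letterE. Qed.

Definition fwd_back {A : Type} (c : A) : seq (A * bool) := [:: (c, true); (c, false)].

Lemma zip_pword (A : Type) (u V x Z w : 'I_7) (c0 c : A) (S : seq A) :
  zip (pword u V x Z w (size S))
      (fwd_back c0 ++ flatten (map fwd_back S) ++ [:: (c, true)]) =
  [:: ((u, true), (c0, true)); ((V, false), (c0, false))]
  ++ flatten [seq [:: ((x, true), (d, true)); ((Z, false), (d, false))] | d <- S]
  ++ [:: ((w, true), (c, true))].
Proof. by rewrite /pword /=; do 2 congr (_ :: _); elim: S => //= d S ->. Qed.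

Lemma phi_fwd_back (A : Type) y (c0 c : A) (S : seq A) :
  let P := fwd_back c0 ++ flatten (map fwd_back S) ++ [:: (c, true)] in
  zip (phi (size P) y) P =
  [:: ((word_letter y 0, true), (c0, true)); ((word_letter y 1, false), (c0, false))]
  ++ flatten [seq [:: ((word_letter y 2, true), (d, true));
                      ((word_letter y 3, false), (d, false))] | d <- S]
  ++ [:: ((word_letter y 4, true), (c, true))].
Proof.
move=> P; have -> : size P = (size S).*2 + 3.
  rewrite {}/P size_cat /= size_cat addnC /= -addnA; congr (_ + _).
  by elim: S => //= d S ->; rewrite doubleS.
by rewrite /phi addnK doubleK addn3 ltnS ltn0 phi_oddE /P zip_pword.
Qed.

Section StarImage.
Variables (m M n0 : nat) (e : 'I_m -> 'I_m -> nat) (ord : 'I_m -> seq 'I_m).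

Definition top_support (k : 'I_m) : seq (sedge m) :=
  nseq (e k k) (k, 0) ++ flatten [seq nseq (e k j).+1 (j, 0) | j <- ord k] ++ [:: (k, 1)].

Lemma fstar_top k i : M <= i.+1 ->
  fstar M n0 e ord (k, i) =
  fwd_back (k, 0) ++ flatten (map fwd_back (top_support k)) ++ [:: ((k, n0), true)].
Proof.
move=> top.
have flatten_ord : flatten [seq bf (j, 0) (e k j).+1 | j <- ord k] =
    flatten (map fwd_back (flatten [seq nseq (e k j).+1 (j, 0) | j <- ord k])).
  by elim: (ord k) => //= j js ->; rewrite map_cat flatten_cat map_nseq.
by rewrite /fstar ltnNge top /top_support flatten_ord !map_cat !flatten_cat map_nseq -!catA.
Qed.

Lemma split_img_up y k i : i.+1 < M ->
  split_img M n0 e ord y (k, i) = [:: ((y, (k, i.+1)), true)].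
Proof. by move=> up; rewrite /split_img /fstar up. Qed.

Lemma split_img_top y k i : M <= i.+1 ->
  split_img M n0 e ord y (k, i) =
  [:: ((word_letter y 0, (k, 0)), true); ((word_letter y 1, (k, 0)), false)]
  ++ flatten [seq [:: ((word_letter y 2, d), true); ((word_letter y 3, d), false)]
             | d <- top_support k]
  ++ [:: ((word_letter y 4, (k, n0)), true)].
Proof.
move=> top; rewrite /split_img fstar_top // phi_fwd_back.
by do 2 congr (_ :: _); elim: (top_support k) => //= d S ->.
Qed.

End StarImage.

Section SplitGraph.
Variables (m M1 n0 : nat) (e : 'I_m -> 'I_m -> nat) (ord : 'I_m -> seq 'I_m).
Hypothesis M1_gt0 : 0 < M1.
Hypothesis ord_perm : forall k, perm_eq (ord k) [seq j <- enum 'I_m | j != k].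

Local Notation T := (split_trans M1.+1 n0 e ord).
Local Notation arc := (mx_arc T).

(* The matrix index of the split edge y_(s_k, i+1). *)
Definition split_idx (y : 'I_7) (k : 'I_m) (i : nat) : 'I_#|{: split_edge m M1.+1}| :=
  enum_rank ((y, k, inord i) : split_edge m M1.+1).

Lemma split_idx_onto x : exists y k i, i <= M1 /\ x = split_idx y k i.
Proof.
rewrite -[x]enum_valK; case: (enum_val x) => [[y k] i].
by exists y, k, i; rewrite -ltnS ltn_ord /split_idx inord_val.
Qed.

Lemma arc_split_idx y k i z k' l b : i <= M1 -> l <= M1 ->
  ((z, (k', l)), b) \in split_img M1.+1 n0 e ord y (k, i) ->
  arc (split_idx y k i) (split_idx z k' l).
Proof.
move=> iM lM img; rewrite /mx_arc /split_trans mxE /split_idx !enum_rankK.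
rewrite /se_val /= !inordK //.
by rewrite -has_count; apply/hasP; exists ((z, (k', l)), b).
Qed.

Lemma arc_up y k i : i < M1 -> arc (split_idx y k i) (split_idx y k i.+1).
Proof.
move=> iM; apply: (arc_split_idx (b := true) (ltnW iM) iM).
by rewrite split_img_up ?mem_head.
Qed.

Definition climb y k i d := [seq split_idx y k l | l <- iota i.+1 d].

Lemma path_climb y k i d : i + d <= M1 -> path arc (split_idx y k i) (climb y k i d).
Proof.
elim: d i => [|d IH] i //= idM.
have iM : i < M1 by rewrite (leq_trans _ idM) // addnS ltnS leq_addr.
by rewrite arc_up // IH // addSnnS.
Qed.

Lemma last_climb y k i d :
  last (split_idx y k i) (climb y k i d) = split_idx y k (i + d).
Proof. by elim: d i => [|d IH] i /=; rewrite ?addn0 // IH addSnnS. Qed.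

Lemma size_climb y k i d : size (climb y k i d) = d.
Proof. by rewrite size_map size_iota. Qed.

Lemma connect_climb y k i j :
  i <= j -> j <= M1 -> connect arc (split_idx y k i) (split_idx y k j).
Proof.
move=> ij jM; apply/connectP; exists (climb y k i (j - i)).
  by rewrite path_climb // subnKC.
by rewrite last_climb subnKC.
Qed.

Lemma arc_top_letter k y z : letter_succ y z -> arc (split_idx y k M1) (split_idx z k 0).
Proof.
case/orP=> /eqP ->; [apply: (arc_split_idx (b := true) (leqnn M1) (leq0n M1))
                    | apply: (arc_split_idx (b := false) (leqnn M1) (leq0n M1))];
  by rewrite split_img_top ?inE ?eqxx ?orbT.
Qed.

Lemma arc_top_cross y k j :
  j != k -> arc (split_idx y k M1) (split_idx (word_letter y 2) j 0).
Proof.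
move=> jk; apply: (arc_split_idx (b := true) (leqnn M1) (leq0n M1)).
rewrite split_img_top // !mem_cat.
apply/orP; right; apply/orP; left; apply/flatten_mapP; exists (j, 0); last exact: mem_head.
rewrite /top_support !mem_cat; apply/orP; right; apply/orP; left.
apply/flatten_mapP; exists j; last exact: mem_head.
by rewrite (perm_mem (ord_perm k)) mem_filter jk mem_enum.
Qed.

Lemma arc_top_return y k : arc (split_idx y k M1) (split_idx (word_letter y 2) k 1).
Proof.
apply: (arc_split_idx (b := true) (leqnn M1) M1_gt0).
rewrite split_img_top // !mem_cat.
apply/orP; right; apply/orP; left; apply/flatten_mapP; exists (k, 1); last exact: mem_head.
by rewrite /top_support !mem_cat mem_seq1 eqxx !orbT.
Qed.

Lemma connect_top_letters k y z :
  connect letter_succ y z -> connect arc (split_idx y k M1) (split_idx z k M1).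
Proof.
case/connectP=> p; elim: p y => [|w p IH] y /=; first by move=> _ ->.
case/andP=> yw /IH wz /wz; apply: connect_trans.
exact: connect_trans (connect1 (arc_top_letter k yw)) (connect_climb _ _ _ (leqnn M1)).
Qed.

Definition hub k := split_idx la k M1.

Lemma connect_hub k k' : connect arc (hub k) (hub k').
Proof.
have [-> | k'k] := eqVneq k' k; first exact: connect0.
apply: connect_trans (connect1 (arc_top_cross la k'k)) _.
by rewrite word_letter_a; apply: connect_climb.
Qed.

Lemma connect_to_hub y k i : i <= M1 -> connect arc (split_idx y k i) (hub k).
Proof.
move=> iM; apply: connect_trans (connect_climb y k iM (leqnn M1)) _.
exact: connect_top_letters (letter_connect y la).
Qed.

Lemma connect_from_hub z k i : i <= M1 -> connect arc (hub k) (split_idx z k i).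
Proof.
move=> iM; have [y yz] : exists y, letter_succ y z.
  apply: (@connect_in_arc _ _ z) (letter_connect (word_letter z 0) z).
  by rewrite /letter_succ eqxx.
apply: connect_trans (connect_top_letters k (letter_connect la y)) _.
exact: connect_trans (connect1 (arc_top_letter k yz)) (connect_climb _ _ _ iM).
Qed.

Lemma split_connect x x' : connect arc x x'.
Proof.
have [y [k [i [iM ->]]]] := split_idx_onto x.
have [y' [k' [i' [iM' ->]]]] := split_idx_onto x'.
apply: connect_trans (connect_to_hub y k iM) _.
exact: connect_trans (connect_hub k k') (connect_from_hub y' k' iM').
Qed.

Lemma aperiodic_hub k : aperiodic_at T (hub k).
Proof.
have [a_u a_x] := word_letter_a.
have hub_cycle i :
    i <= M1 -> arc (hub k) (split_idx la k i) -> mx_walk T (M1 - i).+1 (hub k) (hub k).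
  move=> iM out.
  have := @mx_walk_path _ T (hub k) (split_idx la k i :: climb la k i (M1 - i)).
  by rewrite /= size_climb last_climb subnKC // out path_climb ?subnKC //; apply.
have hub_out : arc (hub k) (split_idx la k 0).
  by apply: arc_top_letter; rewrite /letter_succ a_u eqxx.
have hub_return : arc (hub k) (split_idx la k 1).
  by have := arc_top_return la k; rewrite a_x.
exists M1 => //; apply/andP; split.
  by have := hub_cycle 1 M1_gt0 hub_return; rewrite subn1 prednK.
by have := hub_cycle 0 (leq0n M1) hub_out; rewrite subn0.
Qed.

Lemma split_aperiodic x : aperiodic_at T x.
Proof.
have [y [k [i [iM ->]]]] := split_idx_onto x.
exact: aperiodic_at_connect (split_connect _ _) (split_connect _ _) (aperiodic_hub k).
Qed.

Lemma split_trans_mixing : mixing_mx T.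
Proof. exact: mixing_mx_connect_aperiodic split_connect split_aperiodic. Qed.

End SplitGraph.

Theorem mainTheorem8
  (lam : algC) (m : nat) (s : 'I_m -> algC) (N n0 p M : nat)
  (e : 'I_m -> 'I_m -> nat) (ord : 'I_m -> seq 'I_m) :
  Perron lam ->
  (forall k, inO lam (s k) /\ (0 < s k)%R) ->
  0 < n0 -> n0 < N ->
  (exists o : algC, inO lam o /\ (lam ^+ N - lam ^+ n0 = 2%:R * o)%R) ->
  M = p * (N - n0) + N ->
  (forall k, (lam ^+ M * s k =
      \sum_(i < m) ((2 * e k i + 2)%:R * s i) + 2%:R * lam * s k
      + lam ^+ n0 * s k)%R) ->
  (forall k, perm_eq (ord k) [seq j <- enum 'I_m | j != k]) ->
  mixing_mx (split_trans M n0 e ord).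
Proof.
(* The arithmetic of lam only guarantees that the exponents [e] exist; mixing
   needs nothing but M >= 2 and that [ord k] lists the j != k. *)
move=> _ _ n0_gt0 n0_ltN _ M_def _ ord_perm.
have M_gt1 : 1 < M by rewrite M_def (leq_trans (leq_ltn_trans n0_gt0 n0_ltN)) ?leq_addl.
by case: M M_gt1 {M_def} => [|[|M1]] // _; apply: split_trans_mixing.
Qed.
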